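(* Let $\varphi\in\mathcal{A}$ be w.h.i.s. Then the Casimirs of the Poisson algebra $(\mathcal{A}_\varphi,\{\cdot,\cdot\}_{\mathcal{A}_\varphi})$ are exactly the constants: $H^0(\mathcal{A}_\varphi)=\mathrm{Cas}(\mathcal{A}_\varphi)=\mathbf{F}$. Equivalently, if $f\in\mathcal{A}$ satisfies $\vec\nabla f\times\vec\nabla\varphi\in\varphi\mathcal{A}^3$, then $f\in\mathbf{F}+\varphi\mathcal{A}$.
   Context: $\mathbf{F}$ is a field of characteristic zero and $\mathcal{A}=\mathbf{F}[x,y,z]$. $\vec\nabla f=(\partial f/\partial x,\partial f/\partial y,\partial f/\partial z)$ and $\times$ is the cross product on $\mathcal{A}^3$. Fix positive integers $\varpi_1,\varpi_2,\varpi_3$ without common divisor $>1$ (weights of $x,y,z$). A nonzero polynomial is weight homogeneous of degree $d$ if it is an $\mathbf{F}$-linear combination of monomials $x^ay^bz^c$ with $a\varpi_1+b\varpi_2+c\varpi_3=d$. $\varphi\in\mathcal{A}$ is w.h.i.s. if it is weight homogeneous and $\mathcal{A}_{sing}:=\mathcal{A}/\langle\partial_x\varphi,\partial_y\varphi,\partial_z\varphi\rangle$ is a nonzero finite-dimensional $\mathbf{F}$-vector space. The Poisson bracket $\{\cdot,\cdot\}_\varphi$ on $\mathcal{A}$ is determined by $\{x,y\}_\varphi=\partial_z\varphi$, $\{y,z\}_\varphi=\partial_x\varphi$, $\{z,x\}_\varphi=\partial_y\varphi$; it induces a Poisson bracket $\{\cdot,\cdot\}_{\mathcal{A}_\varphi}$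 on $\mathcal{A}_\varphi:=\mathcal{A}/\langle\varphi\rangle$ via $\{\pi(f),\pi(g)\}_{\mathcal{A}_\varphi}=\pi(\{f,g\}_\varphi)$, $\pi:\mathcal{A}\to\mathcal{A}_\varphi$ the projection. A Casimir is an element $c$ with $\{c,\cdot\}_{\mathcal{A}_\varphi}=0$. *)

From HB Require Import structures.
From mathcomp Require Import all_boot all_order all_algebra.
From mathcomp Require Import multinomials.mpoly.
Set Implicit Arguments. Unset Strict Implicit. Unset Printing Implicit Defensive.
Import GRing.Theory.
Local Open Scope ring_scope.

(* A = F[x,y,z] is {mpoly F[3]}; x = 'X_0, y = 'X_1, z = 'X_2. *)
Notation poly3 F := {mpoly F[3]}.

Definition i0 : 'I_3 := @Ordinal 3 0 isT.
Definition i1 : 'I_3 := @Ordinal 3 1 isT.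
Definition i2 : 'I_3 := @Ordinal 3 2 isT.

Section Defs.
Variable F : fieldType.

Definition wdeg (w : 'I_3 -> nat) (m : 'X_{1..3}) : nat :=
  (\sum_(i < 3) w i * m i)%N.

Definition weight_homogeneous (w : 'I_3 -> nat) (d : nat) (p : poly3 F) : Prop :=
  p != 0 /\ forall m, m \in msupp p -> wdeg w m = d.

Definition in_jacobian_ideal (phi f : poly3 F) : Prop :=
  exists g : 'I_3 -> poly3 F, f = \sum_(i < 3) g i * phi^`M(i).

(* A_sing = A / <dx phi, dy phi, dz phi> is nonzero and finite-dimensional:
   the ideal is proper, and the quotient is spanned by the images of
   finitely many polynomials. *)
Definition Asing_nonzero (phi : poly3 F) : Prop := ~ in_jacobian_ideal phi 1.
Definition Asing_findim (phi : poly3 F) : Prop :=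
  exists s : seq (poly3 F), forall f : poly3 F,
    exists c : nat -> F,
      in_jacobian_ideal phi (f - \sum_(k < size s) c k *: s`_k).

Definition whis (w : 'I_3 -> nat) (phi : poly3 F) : Prop :=
  (exists d, weight_homogeneous w d phi) /\ Asing_nonzero phi /\ Asing_findim phi.

Definition grad (f : poly3 F) : 'I_3 -> poly3 F := fun i => f^`M(i).
Definition cross (u v : 'I_3 -> poly3 F) : 'I_3 -> poly3 F :=
  fun i => if i == i0 then u i1 * v i2 - u i2 * v i1
           else if i == i1 then u i2 * v i0 - u i0 * v i2
           else u i0 * v i1 - u i1 * v i0.

(* {f,g}_phi = grad phi . (grad f x grad g); it satisfies
   {x,y} = dz phi, {y,z} = dx phi, {z,x} = dy phi. *)
Definition pbracket (phi f g : poly3 F) : poly3 F :=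
  \sum_(i < 3) grad phi i * cross (grad f) (grad g) i.

Definition in_phiA (phi f : poly3 F) : Prop := exists h : poly3 F, f = phi * h.

(* pi(f) is a Casimir of A_phi = A/<phi> with the induced bracket:
   {pi f, pi g} = pi {f,g}_phi = 0 for all g. *)
Definition casimir_rep (phi f : poly3 F) : Prop :=
  forall g : poly3 F, in_phiA phi (pbracket phi f g).

(* pi(f) lies in F (image of the constants): f in F + phi A *)
Definition const_mod_phi (phi f : poly3 F) : Prop :=
  exists (c : F) (h : poly3 F), f = c%:MP + phi * h.
End Defs.

From HB Require Import structures.
From mathcomp Require Import all_boot all_order all_algebra.
From mathcomp Require Import multinomials.mpoly.
From mathcomp Require Import ring.
From Stdlib Require Import ClassicalEpsilon.
Set Implicit Arguments. Unset Strict Implicit. Unset Printing Implicit Defensive.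
Import GRing.Theory.
Local Open Scope ring_scope.

(* Let E = \sum_i w_i x_i d_i be the weighted Euler operator; it multiplies a
   weight-homogeneous polynomial by its weight, so E(phi) = d phi and the
   Jacobian ideal J of phi is E-stable. If grad f x grad phi lies in phi A^3,
   the identity
     E(f) d_i phi = d_i f E(phi) + \sum_j w_j x_j (d_j f d_i phi - d_i f d_j phi)
   puts E(f) J inside phi A. As A/J is finite dimensional and the powers of x
   are E-eigenvectors with pairwise distinct eigenvalues, J contains a power of
   x, and likewise a power of y; these being coprime, E(f) lies in phi A. In
   characteristic 0 with positive weights E is invertible on phi A, giving K
   with E(f - phi K) = 0, i.e. f - phi K is constant. Casimirs satisfy the
   hypothesis since {f, x_i} is, up to sign, the i-th component of
   grad f x grad phi. *)

Section StableSubspace.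
Variables (K : fieldType) (V : lmodType K) (D : {linear V -> V}) (W : V -> Prop).
Hypotheses (W0 : W 0) (WD : forall u v, W u -> W v -> W (u + v))
  (WZ : forall c v, W v -> W (c *: v)) (W_stable : forall v, W v -> W (D v)).

Lemma stable_subspaceB u v : W u -> W v -> W (u - v).
Proof. by move=> Wu Wv; apply: WD => //; rewrite -scaleN1r; apply: WZ. Qed.

Lemma stable_subspace_sum (I : Type) (r : seq I) (P : pred I) (F : I -> V) :
  (forall i, P i -> W (F i)) -> W (\sum_(i <- r | P i) F i).
Proof. by move=> WF; apply: (big_ind W) => //; apply: WD. Qed.

Lemma eigen_components_stable M (a : nat -> V) (lam : nat -> K) :
  (forall n, D (a n) = lam n *: a n) ->
  (forall n n', (n < M)%N -> (n' < M)%N -> lam n = lam n' -> n = n') ->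
  W (\sum_(n < M) a n) -> forall n, (n < M)%N -> W (a n).
Proof.
elim: M a => [|M IH] a Da lam_inj Wsum n //.
move: Wsum; rewrite big_ord_recr /= => Wsum.
set b := fun n => (lam n - lam M) *: a n.
have Wb : W (\sum_(n < M) b n).
  have -> : \sum_(n < M) b n = D (\sum_(n < M) a n + a M)
                               - lam M *: (\sum_(n < M) a n + a M).
    rewrite linearD linear_sum /= Da scalerDr scaler_sumr opprD addrACA subrr addr0.
    by rewrite -sumrB; apply: eq_bigr => i _; rewrite /b Da scalerBl.
  by apply: stable_subspaceB; [apply: W_stable | apply: WZ].
have Wa_lt k : (k < M)%N -> W (a k).
  move=> ltkM; have lam_neq : lam k - lam M != 0.
    by rewrite subr_eq0; apply/eqP => /lam_inj-/(_ (ltnW ltkM) (ltnSn M)) ek;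
      rewrite ek ltnn in ltkM.
  rewrite -[a k](scalerK lam_neq); apply: WZ; apply: (IH b) => // [i|i i' /ltnW + /ltnW].
    by rewrite /b linearZ /= Da !scalerA mulrC.
  exact: lam_inj.
rewrite ltnS leq_eqVlt => /orP[/eqP ->|]; last exact: Wa_lt.
rewrite -[a M](addKr (\sum_(n < M) a n)) addrC.
by apply: stable_subspaceB => //; apply: stable_subspace_sum => i _; apply: Wa_lt.
Qed.

(* Some nontrivial combination of the [size s + 1] vectors [u n] lies in [W];
   by the previous lemma each of its eigen-components does. *)
Lemma eigenvector_in_stable_subspace (u : nat -> V) (lam : nat -> K) :
  (forall n, D (u n) = lam n *: u n) -> injective lam ->
  (exists s : seq V, forall v, exists c : nat -> K,
      W (v - \sum_(k < size s) c k *: s`_k)) ->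
  exists n, W (u n).
Proof.
move=> Du lam_inj [s Ws]; set S := size s.
have [c Wc] := ClassicalEpsilon.choice _ (fun n => Ws (u n)).
pose A : 'M[K]_(S.+1, S) := \matrix_(n, k) c n k.
have : kermx A != 0.
  rewrite kermx_eq0 /row_free; apply/negP => /eqP rkA.
  by have := rank_leq_col A; rewrite rkA ltnn.
case/rowV0Pn => v /sub_kermxP vA /rV0Pn[j vj].
pose a n := v 0 (inord n) *: u n.
have Wsum : W (\sum_(n < S.+1) a n).
  have -> : \sum_(n < S.+1) a n =
      \sum_(n < S.+1) v 0 n *: (u n - \sum_(k < S) c n k *: s`_k).
    under [RHS]eq_bigr do rewrite scalerBr.
    rewrite sumrB [X in _ - X](_ : _ = 0) ?subr0.
      by apply: eq_bigr => n _; rewrite /a inord_val.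
    under eq_bigr do rewrite scaler_sumr.
    rewrite exchange_big /=; apply: big1 => k _.
    under eq_bigr do rewrite scalerA.
    rewrite -scaler_suml (_ : \sum_(n < S.+1) _ = (v *m A) 0 k).
      by rewrite vA mxE scale0r.
    by rewrite mxE; apply: eq_bigr => n _; rewrite mxE.
  by apply: stable_subspace_sum => n _; apply: WZ.
have Waj : W (a j).
  apply: (eigen_components_stable (lam := lam)) Wsum _ (ltn_ord j) => [n|n n' _ _].
    by rewrite /a linearZ /= Du !scalerA mulrC.
  exact: lam_inj.
by exists j; rewrite -(scalerK vj (u j)); apply: WZ; rewrite -[j in v 0 j]inord_val.
Qed.

End StableSubspace.

Lemma ord3_cases (i : 'I_3) : i = i0 \/ i = i1 \/ i = i2.
Proof.
by case: i => [[|[|[|k]]] lti]; [left | right; left | right; right | ];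
  try apply: val_inj.
Qed.

Lemma sum3 (V : nmodType) (E : 'I_3 -> V) : \sum_(i < 3) E i = E i0 + E i1 + E i2.
Proof.
by rewrite !big_ord_recr big_ord0 /= add0r; congr (E _ + E _ + E _); apply: val_inj.
Qed.

Lemma pchar0_natr_inj (R : idomainType) :
  [pchar R] =i pred0 -> injective (fun k : nat => k%:R : R).
Proof.
move=> /pcharf0P natf_eq0 a b eab; apply/eqP; rewrite eqn_leq.
case/orP: (leq_total a b) => [le_ab|le_ba].
  by rewrite le_ab /= -subn_eq0 -natf_eq0 natrB // eab subrr.
by rewrite le_ba andbT -subn_eq0 -natf_eq0 natrB // eab subrr.
Qed.

Section MpolyFacts.
Variables (n : nat) (R : comNzRingType).
Implicit Types p q : {mpoly R[n]}.

Lemma mcoeffMX_eq0 p (m k : 'X_{1..n}) : ~~ (m <= k)%MM -> (p * 'X_[m])@_k = 0.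
Proof.
move=> mNk; apply: memN_msupp_eq0; apply: contra mNk.
by rewrite (perm_mem (msuppMX p m)) => /mapP[m' _ ->]; rewrite lem_addr.
Qed.

Lemma mcoeff_mulX_deriv (i : 'I_n) p (m : 'X_{1..n}) :
  ('X_i * p^`M(i))@_m = (m i)%:R * p@_m.
Proof.
rewrite mulrC; have [Um|] := boolP (U_(i) <= m)%MM.
  rewrite -[in LHS](submK Um) addmC mcoeffMX mcoeff_deriv submK // mnmBE mnm1E eqxx.
  by move: Um; rewrite lep1mP => Um; rewrite subn1 prednK ?lt0n // mulr_natl.
move=> NUm; rewrite mcoeffMX_eq0 //.
by move: NUm; rewrite lep1mP negbK => /eqP->; rewrite mul0r.
Qed.

Lemma mpoly_of_coeff (E : 'X_{1..n} -> R) k :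
  (forall m, (k <= mdeg m)%N -> E m = 0) -> exists q : {mpoly R[n]}, forall m, q@_m = E m.
Proof.
move=> E0; exists (\sum_(m : 'X_{1..n < k}) E m *: 'X_[m]) => m.
have [/mcoeff_mpoly-> //|km] := ltnP (mdeg m) k.
rewrite raddf_sum big1 ?E0 //= => m' _.
rewrite mcoeffZ mcoeffX; case: eqP => [em|]; last by rewrite mulr0.
by have := bmdeg m'; rewrite em ltnNge km.
Qed.

Lemma mpolyXn_neq0 (i : 'I_n) k : ('X_i ^+ k : {mpoly R[n]}) != 0.
Proof.
apply/eqP => /(congr1 (mcoeff (U_(i) *+ k)%MM)).
by rewrite mcoeffXn eqxx mcoeff0 => /eqP; rewrite oner_eq0.
Qed.

Lemma dvdXn_mulXn (i j : 'I_n) N M p q : i != j ->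
  p * 'X_j ^+ M = q * 'X_i ^+ N -> exists r, p = r * 'X_i ^+ N.
Proof.
rewrite !mpolyXn => neq_ij epq.
have p0 (m : 'X_{1..n}) : (m i < N)%N -> p@_m = 0.
  move=> ltmN; rewrite -(mcoeffMX p (U_(j) *+ M)%MM m) epq mcoeffMX_eq0 //.
  apply/negP => /mnm_lepP/(_ i); rewrite mnmDE !mulmnE !mnm1E eqxx eq_sym.
  by rewrite (negPf neq_ij) mul0n add0n mul1n leqNgt ltmN.
have [r er] : exists r : {mpoly R[n]}, forall m, r@_m = p@_(U_(i) *+ N + m)%MM.
  apply: (@mpoly_of_coeff _ (msize p)) => m lepm; apply: memN_msupp_eq0.
  by apply/negP => /msize_mdeg_lt; rewrite mdegD ltnNge (leq_trans lepm (leq_addl _ _)).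
exists r; apply/mpolyP => m; have [le_m|] := boolP (U_(i) *+ N <= m)%MM.
  by rewrite -(submK le_m) addmC mcoeffMX er.
move=> Nle_m; rewrite mcoeffMX_eq0 // p0 //; rewrite ltnNge; apply: contra Nle_m => le_Nm.
by apply/mnm_lepP => k; rewrite mulmnE mnm1E; case: eqP => [<-|_]; rewrite ?mul1n ?mul0n.
Qed.

End MpolyFacts.

Section Euler.
Variables (R : idomainType) (w : 'I_3 -> nat).
Implicit Types p q : poly3 R.

Definition euler p : poly3 R := \sum_(i < 3) (w i)%:R *: ('X_i * p^`M(i)).

Lemma mcoeff_euler p m : (euler p)@_m = (wdeg w m)%:R * p@_m.
Proof.
rewrite /euler raddf_sum /wdeg natr_sum mulr_suml; apply: eq_bigr => i _ /=.
by rewrite mcoeffZ mcoeff_mulX_deriv natrM mulrA.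
Qed.

Lemma euler_is_linear : linear euler.
Proof.
move=> c p q; apply/mpolyP => m.
by rewrite mcoeffD mcoeffZ !mcoeff_euler mcoeffD mcoeffZ mulrDr mulrCA.
Qed.

HB.instance Definition _ :=
  GRing.isLinear.Build R (poly3 R) (poly3 R) _ euler euler_is_linear.

Lemma eulerM p q : euler (p * q) = euler p * q + p * euler q.
Proof.
rewrite /euler mulr_suml mulr_sumr -big_split; apply: eq_bigr => i _ /=.
by rewrite mderivM -!mul_mpolyC; ring.
Qed.

Lemma euler_homog p e :
  (forall m, m \in msupp p -> wdeg w m = e) -> euler p = e%:R *: p.
Proof.
move=> hom; apply/mpolyP => m; rewrite mcoeff_euler mcoeffZ.
by have [/hom->|/memN_msupp_eq0->] := boolP (m \in msupp p); rewrite ?mulr0.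
Qed.

Lemma wdegD m1 m2 : wdeg w (m1 + m2)%MM = (wdeg w m1 + wdeg w m2)%N.
Proof. by rewrite /wdeg -big_split; apply: eq_bigr => i _; rewrite mnmDE mulnDr. Qed.

Lemma wdegMn m k : wdeg w (m *+ k)%MM = (wdeg w m * k)%N.
Proof. by rewrite /wdeg big_distrl; apply: eq_bigr => i _; rewrite mulmnE mulnA. Qed.

Lemma wdegU i : wdeg w U_(i) = w i.
Proof.
rewrite /wdeg (bigD1 i) //= big1 => [|j /negPf nji]; last by rewrite mnm1E eq_sym nji muln0.
by rewrite mnm1E eqxx muln1 addn0.
Qed.

Lemma euler_Xn i k : euler ('X_i ^+ k) = (w i * k)%:R *: 'X_i ^+ k.
Proof.
by rewrite mpolyXn; apply: euler_homog => m; rewrite msuppX inE => /eqP->;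
  rewrite wdegMn wdegU.
Qed.

Lemma euler_mul_deriv p q i :
  euler p * q^`M(i) = p^`M(i) * euler q
    + \sum_(j < 3) (w j)%:R *: ('X_j * (p^`M(j) * q^`M(i) - p^`M(i) * q^`M(j))).
Proof.
rewrite /euler mulr_suml mulr_sumr -big_split; apply: eq_bigr => j _ /=.
by rewrite -!mul_mpolyC; ring.
Qed.

Hypothesis w_gt0 : forall i, (0 < w i)%N.

Lemma wdeg_eq0 m : (wdeg w m == 0%N) = (m == 0%MM).
Proof.
apply/idP/eqP => [|->]; last by rewrite /wdeg big1 // => i _; rewrite mnm0E muln0.
rewrite /wdeg sum_nat_eq0 => /forallP m0; apply/mnmP => i; rewrite mnm0E.
by have := m0 i; rewrite muln_eq0 eqn0Ngt w_gt0 /= => /eqP.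
Qed.

Hypothesis charR0 : [pchar R] =i pred0.

Lemma euler_eq0 p : euler p = 0 -> p = (p@_0%MM)%:MP.
Proof.
move=> ep; apply/mpolyP => m; rewrite mcoeffC.
have [->|nz_m] := eqVneq m 0%MM; first by rewrite mulr1.
have /eqP := congr1 (mcoeff m) ep.
rewrite mcoeff_euler mcoeff0 mulf_eq0 (pcharf0P _).1 // wdeg_eq0 (negPf nz_m).
by move=> /eqP->; rewrite mulr0.
Qed.

End Euler.

Section JacobianIdeal.
Variables (F : fieldType) (phi : poly3 F).
Local Notation inJ := (in_jacobian_ideal phi).

Lemma jacobian_ideal0 : inJ 0.
Proof. by exists (fun _ => 0); rewrite big1 // => i _; rewrite mul0r. Qed.

Lemma jacobian_idealD p q : inJ p -> inJ q -> inJ (p + q).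
Proof.
move=> [a ->] [b ->]; exists (fun i => a i + b i).
by rewrite -big_split; apply: eq_bigr => i _; rewrite mulrDl.
Qed.

Lemma jacobian_idealMl a p : inJ p -> inJ (a * p).
Proof.
move=> [b ->]; exists (fun i => a * b i).
by rewrite mulr_sumr; apply: eq_bigr => i _; rewrite mulrA.
Qed.

Lemma jacobian_idealZ c p : inJ p -> inJ (c *: p).
Proof. by rewrite -mul_mpolyC; apply: jacobian_idealMl. Qed.

Variables (w : 'I_3 -> nat) (d : nat).
Hypothesis phi_homog : forall m, m \in msupp phi -> wdeg w m = d.

Lemma euler_phi : euler w phi = d%:R *: phi.
Proof. exact: euler_homog. Qed.

Lemma euler_dphi i : euler w phi^`M(i) = (d - w i)%:R *: phi^`M(i).
Proof.
apply: euler_homog => m; rewrite mcoeff_msupp mcoeff_deriv => nz_m.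
have : (m + U_(i))%MM \in msupp phi.
  by rewrite mcoeff_msupp; apply: contra nz_m => /eqP->; rewrite mul0rn.
by move/phi_homog <-; rewrite wdegD wdegU addnK.
Qed.

Lemma jacobian_ideal_euler p : inJ p -> inJ (euler w p).
Proof.
move=> [a ->]; exists (fun i => euler w (a i) + (d - w i)%:R *: a i).
rewrite linear_sum; apply: eq_bigr => i _ /=.
by rewrite eulerM euler_dphi -!mul_mpolyC; ring.
Qed.

Hypotheses (charF0 : [pchar F] =i pred0) (w_gt0 : forall i, (0 < w i)%N).

Lemma Xn_in_jacobian_ideal k : Asing_findim phi -> exists N, inJ ('X_k ^+ N).
Proof.
apply: (@eigenvector_in_stable_subspace _ _ (euler w) _ jacobian_ideal0
  jacobian_idealD jacobian_idealZ jacobian_ideal_euler _ (fun N => (w k * N)%:R)).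
  exact: euler_Xn.
by move=> N N' /(pchar0_natr_inj charF0)/eqP; rewrite eqn_pmul2l // => /eqP.
Qed.

End JacobianIdeal.

Section PrincipalIdeal.
Variables (F : fieldType) (phi : poly3 F).
Local Notation inPhi := (in_phiA phi).

Lemma in_phiA0 : inPhi 0.
Proof. by exists 0; rewrite mulr0. Qed.

Lemma in_phiAD p q : inPhi p -> inPhi q -> inPhi (p + q).
Proof. by move=> [a ->] [b ->]; exists (a + b); rewrite mulrDr. Qed.

Lemma in_phiAMl a p : inPhi p -> inPhi (a * p).
Proof. by move=> [b ->]; exists (a * b); rewrite mulrCA. Qed.

Lemma in_phiAN p : inPhi p -> inPhi (- p).
Proof. by rewrite -mulN1r; apply: in_phiAMl. Qed.

Lemma in_phiA_sum (I : Type) (r : seq I) (P : pred I) (E : I -> poly3 F) :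
  (forall i, P i -> inPhi (E i)) -> inPhi (\sum_(i <- r | P i) E i).
Proof. by move=> PE; apply: (big_ind inPhi) => //; [apply: in_phiA0 | apply: in_phiAD]. Qed.

Lemma cross_minor_in_phiA (u v : 'I_3 -> poly3 F) :
  (forall k, inPhi (cross u v k)) -> forall i j, inPhi (u j * v i - u i * v j).
Proof.
move=> uv i j; have uvN k : inPhi (- cross u v k) by apply: in_phiAN.
have [->|[->|->]] := ord3_cases i; have [->|[->|->]] := ord3_cases j;
  rewrite ?subrr; try exact: in_phiA0;
  first [exact: (uv i0) | exact: (uv i1) | exact: (uv i2) | rewrite -opprB;
         first [exact: (uvN i0) | exact: (uvN i1) | exact: (uvN i2)]].
Qed.

Lemma mul_jacobian_in_phiA g p :
  (forall i, inPhi (g * phi^`M(i))) -> in_jacobian_ideal phi p -> inPhi (g * p).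
Proof.
move=> g_dphi [a ->]; rewrite mulr_sumr; apply: in_phiA_sum => i _.
by rewrite mulrCA; apply: in_phiAMl.
Qed.

Lemma in_phiA_of_mulXn g (i j : 'I_3) N M : phi != 0 -> i != j ->
  inPhi (g * 'X_i ^+ N) -> inPhi (g * 'X_j ^+ M) -> inPhi g.
Proof.
move=> nz_phi neq_ij [h eh] [h' eh'].
have : h * 'X_j ^+ M = h' * 'X_i ^+ N.
  apply: (mulfI nz_phi); rewrite !mulrA -eh -eh' -!mulrA; congr (g * _); exact: mulrC.
case/(dvdXn_mulXn neq_ij) => r er; exists r.
by apply: (mulIf (mpolyXn_neq0 _ i N)); rewrite eh er mulrA.
Qed.

Variables (w : 'I_3 -> nat) (d : nat).
Hypothesis phi_homog : forall m, m \in msupp phi -> wdeg w m = d.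

Lemma euler_mul_dphi_in_phiA f :
  (forall k, inPhi (cross (grad f) (grad phi) k)) ->
  forall i, inPhi (euler w f * phi^`M(i)).
Proof.
move=> f_phi i; rewrite euler_mul_deriv (euler_phi phi_homog); apply: in_phiAD.
  by exists (d%:R *: f^`M(i)); rewrite -!scalerAr mulrC.
apply: in_phiA_sum => j _; rewrite -mul_mpolyC mulrA; apply: in_phiAMl.
exact: (cross_minor_in_phiA f_phi).
Qed.

Hypotheses (charF0 : [pchar F] =i pred0) (w_gt0 : forall i, (0 < w i)%N).

Lemma euler_mul_phi_surj k : (0 < d)%N -> exists K, euler w (phi * K) = phi * k.
Proof.
move=> d_gt0; have nz_c m : ((wdeg w m + d)%:R : F) != 0.
  by rewrite (pcharf0P _).1 // addn_eq0 negb_and -!lt0n d_gt0 orbT.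
have [K eK] : exists K : poly3 F, forall m, K@_m = k@_m / (wdeg w m + d)%:R.
  apply: (@mpoly_of_coeff _ _ _ (msize k)) => m le_km.
  by rewrite memN_msupp_eq0 ?mul0r //; apply/negP => /msize_mdeg_lt; rewrite ltnNge le_km.
exists K; rewrite eulerM (euler_phi phi_homog) -scalerAl scalerAr -mulrDr.
congr (phi * _); apply/mpolyP => m; rewrite mcoeffD mcoeffZ mcoeff_euler eK.
by rewrite -mulrDl -natrD addnC mulrCA divff // mulr1.
Qed.

Lemma const_mod_phi_of_euler f :
  phi != 0 -> inPhi (euler w f) -> const_mod_phi phi f.
Proof.
move=> nz_phi [k ef]; have [d0|d_gt0] := posnP d.
  have ephi : phi = (phi@_0%MM)%:MP.
    by apply: (euler_eq0 w_gt0 charF0); rewrite (euler_phi phi_homog) d0 scale0r.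
  have nz_c : phi@_0%MM != 0 by apply: contra nz_phi; rewrite {2}ephi => /eqP->.
  exists 0, ((phi@_0%MM)^-1%:MP * f).
  by rewrite {1}ephi mulrA -mpolyCM divff // mul1r mpolyC0 add0r.
have [K eK] := euler_mul_phi_surj k d_gt0.
have /(euler_eq0 w_gt0 charF0) ec : euler w (f - phi * K) = 0.
  by rewrite linearB /= ef eK subrr.
by exists (f - phi * K)@_0%MM, K; rewrite -ec subrK.
Qed.

End PrincipalIdeal.

Section PoissonBracket.
Variables (F : fieldType) (phi : poly3 F).
Implicit Types u v : 'I_3 -> poly3 F.

Lemma cross_i0 u v : cross u v i0 = u i1 * v i2 - u i2 * v i1. Proof. by []. Qed.
Lemma cross_i1 u v : cross u v i1 = u i2 * v i0 - u i0 * v i2. Proof. by []. Qed.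
Lemma cross_i2 u v : cross u v i2 = u i0 * v i1 - u i1 * v i0. Proof. by []. Qed.

Lemma mderivXi (i j : 'I_3) : ('X_j : poly3 F)^`M(i) = (j == i)%:R.
Proof.
rewrite mderivX mnm1E; case: eqP => [->|_]; last by rewrite scale0r.
have -> : (U_(i) - U_(i) = 0)%MM by apply/mnmP => k; rewrite mnmBE subnn mnm0E.
by rewrite mpolyX0 scale1r.
Qed.

Lemma pbracketX f i : pbracket phi f 'X_i = - cross (grad f) (grad phi) i.
Proof.
rewrite /pbracket sum3 cross_i0 cross_i1 cross_i2 /grad !mderivXi.
by have [->|[->|->]] := ord3_cases i; rewrite ?cross_i0 ?cross_i1 ?cross_i2 /=; ring.
Qed.

Lemma casimir_of_const_mod_phi f : const_mod_phi phi f -> casimir_rep phi f.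
Proof.
move=> [c [h ->]] g; exists (pbracket phi h g).
rewrite /pbracket /grad !sum3 ?cross_i0 ?cross_i1 ?cross_i2 !mderivD !mderivC !mderivM !add0r.
ring.
Qed.

End PoissonBracket.

Lemma const_mod_phi_of_cross (F : fieldType) (w : 'I_3 -> nat) (phi : poly3 F) f :
  [pchar F] =i pred0 -> (forall i, (0 < w i)%N) -> whis w phi ->
  (forall i, in_phiA phi (cross (grad f) (grad phi) i)) -> const_mod_phi phi f.
Proof.
move=> charF0 w_gt0 [[d [nz_phi phi_homog]] [_ findim]] f_phi.
apply: (const_mod_phi_of_euler phi_homog charF0 w_gt0 nz_phi).
have ef_dphi := euler_mul_dphi_in_phiA phi_homog f_phi.
have [N xN] := Xn_in_jacobian_ideal phi_homog charF0 w_gt0 i0 findim.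
have [M xM] := Xn_in_jacobian_ideal phi_homog charF0 w_gt0 i1 findim.
by apply: (@in_phiA_of_mulXn _ _ _ i0 i1 N M nz_phi) => //;
  apply: mul_jacobian_in_phiA ef_dphi _.
Qed.

Theorem mainTheorem9 (F : fieldType) (charF0 : [pchar F] =i pred0)
  (w : 'I_3 -> nat) (wpos : forall i, (0 < w i)%N)
  (wcop : gcdn (w i0) (gcdn (w i1) (w i2)) = 1%N)
  (phi : poly3 F) (hphi : whis w phi) :
  (forall f : poly3 F, casimir_rep phi f <-> const_mod_phi phi f) /\
  (forall f : poly3 F,
     (forall i : 'I_3, in_phiA phi (cross (grad f) (grad phi) i)) ->
     const_mod_phi phi f).
Proof.
have cross_const f := @const_mod_phi_of_cross F w phi f charF0 wpos hphi.
split=> // f; split=> [cas_f|]; last exact: casimir_of_const_mod_phi.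
apply: cross_const => i; have [h eh] := cas_f 'X_i.
by exists (- h); rewrite mulrN -eh pbracketX opprK.
Qed.
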